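(* Under the hypotheses of Proposition 5 (namely $\alpha_1,\dots,\alpha_K\in\mathbb R^d\setminus\{0\}$, $\eta_1,\dots,\eta_J\in\mathbb R^d$ and $\|\pi(\eta_1)\|>\max_{j\ge2}\|\pi(\eta_j)\|$), one has $(\eta_1-\eta_j)^{T}\pi(\eta_1)>0$ for every $j=2,\dots,J$.
   Context: Canonical projection: for $\eta\ne0$, choose a (possibly empty) subset $\{\alpha_{k_1},\dots,\alpha_{k_m}\}$ of $\{\alpha_1,\dots,\alpha_K\}$, $\mathcal H_\eta$ its span, such that $P_{\mathcal H_\eta}\eta=\sum_p\gamma_{k_p}\alpha_{k_p}$ with all $\gamma_{k_p}\ge0$ and $\alpha_k^{T}P_{\mathcal H_\eta^\perp}\eta<0$ for all $k\notin\{k_1,\dots,k_m\}$; such a subset exists and $\pi(\eta):=P_{\mathcal H_\eta^\perp}\eta$ is uniquely determined and continuous in $\eta$ (set $\pi(0)=0$). $P$ denotes orthogonal projection. *)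

From HB Require Import structures.
From mathcomp Require Import all_boot all_order all_algebra.
Set Implicit Arguments. Unset Strict Implicit. Unset Printing Implicit Defensive.
Import Order.TTheory GRing.Theory Num.Theory.
Local Open Scope ring_scope.

Definition dotv (R : rcfType) (d : nat) (u v : 'rV[R]_d) : R := (u *m v^T) 0 0.
Definition normv (R : rcfType) (d : nat) (u : 'rV[R]_d) : R := Num.sqrt (dotv u u).

(* [canonical_proj alpha eta p] : p = pi(eta), the canonical projection.
   For eta <> 0: there is a subset S of {1..K} (H := span of alpha_k, k in S)
   with P_H eta = sum_{k in S} gamma_k alpha_k, gamma_k >= 0, and
   alpha_k^T P_{H^perp} eta < 0 for k notin S; p = P_{H^perp} eta.
   P_{H^perp} eta is written out literally: p is orthogonal to every
   alpha_k (k in S), i.e. p in H^perp, and eta - p = P_H eta lies in H. *)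
Definition canonical_proj (R : rcfType) (d K : nat) (alpha : 'I_K -> 'rV[R]_d)
  (eta p : 'rV[R]_d) : Prop :=
  (eta = 0 /\ p = 0) \/
  (eta != 0 /\
   exists (S : {set 'I_K}) (gamma : 'I_K -> R),
     [/\ (forall k, k \in S -> 0 <= gamma k),
         (forall k, k \in S -> dotv (alpha k) p = 0),
         eta - p = \sum_(k in S) gamma k *: alpha k &
         (forall k, k \notin S -> dotv (alpha k) p < 0)]).

From HB Require Import structures.
From mathcomp Require Import all_boot all_order all_algebra.
From mathcomp Require Import lra.
Import Order.TTheory GRing.Theory Num.Theory.
Set Implicit Arguments. Unset Strict Implicit.
Local Open Scope ring_scope.

(* Let q := pi(eta_1) and q' := pi(eta_j).  Every alpha_k has a nonpositive
   inner product with q, and eta_j - q' is a nonnegative combination of the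
   alpha_k, so (eta_j - q')^T q <= 0; on the other hand (eta_1 - q)^T q = 0.
   Hence (eta_1 - eta_j)^T q >= |q|^2 - q'^T q, which is positive because
   |q'| < |q| (expand 0 <= |q - q'|^2). *)

Section InnerProduct.
Variables (R : rcfType) (d : nat).
Implicit Types u v w : 'rV[R]_d.

Lemma dotvE u v : dotv u v = \sum_i u 0 i * v 0 i.
Proof. by rewrite /dotv mxE; apply: eq_bigr => i _; rewrite mxE. Qed.

Lemma dotvC u v : dotv u v = dotv v u.
Proof. by rewrite !dotvE; apply: eq_bigr => i _; rewrite mulrC. Qed.

Lemma dotvDl u v w : dotv (u + v) w = dotv u w + dotv v w.
Proof. by rewrite !dotvE -big_split; apply: eq_bigr => i _; rewrite mxE mulrDl. Qed.

Lemma dotv0l w : dotv 0 w = 0.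
Proof. by rewrite dotvE big1 // => i _; rewrite mxE mul0r. Qed.

Lemma dotvNl u w : dotv (- u) w = - dotv u w.
Proof. by rewrite !dotvE -sumrN; apply: eq_bigr => i _; rewrite mxE mulNr. Qed.

Lemma dotvBl u v w : dotv (u - v) w = dotv u w - dotv v w.
Proof. by rewrite dotvDl dotvNl. Qed.

Lemma dotvBr u v w : dotv w (u - v) = dotv w u - dotv w v.
Proof. by rewrite dotvC dotvBl !(dotvC w). Qed.

Lemma dotvZl a u w : dotv (a *: u) w = a * dotv u w.
Proof. by rewrite !dotvE mulr_sumr; apply: eq_bigr => i _; rewrite mxE mulrA. Qed.

Lemma dotv_suml (I : finType) (S : {set I}) (F : I -> 'rV[R]_d) w :
  dotv (\sum_(k in S) F k) w = \sum_(k in S) dotv (F k) w.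
Proof. exact: (big_morph (fun u => dotv u w) (fun u v => dotvDl u v w) (dotv0l w)). Qed.

Lemma dotv_ge0 u : 0 <= dotv u u.
Proof. by rewrite dotvE; apply: sumr_ge0 => i _; rewrite -expr2 sqr_ge0. Qed.

Lemma normv_lt_dotv u v : normv u < normv v -> dotv u u < dotv v v.
Proof. by rewrite /normv ltNge ler_sqrt ?dotv_ge0 // -ltNge. Qed.

Lemma dotv_lt_self u v : dotv v v < dotv u u -> dotv v u < dotv u u.
Proof.
move=> lt_vu; have := dotv_ge0 (u - v).
rewrite !dotvBl !dotvBr (dotvC u v); lra.
Qed.

End InnerProduct.

Section CanonicalProjection.
Variables (R : rcfType) (d K : nat) (alpha : 'I_K -> 'rV[R]_d).
Variables (eta p : 'rV[R]_d).
Hypothesis pi_eta : canonical_proj alpha eta p.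

Lemma canonical_proj_polar k : dotv (alpha k) p <= 0.
Proof.
case: pi_eta => [[_ ->] | [_ [S [gamma [_ orth_S _ neg_notS]]]]].
  by rewrite dotvC dotv0l.
by have [/orth_S -> // | /neg_notS/ltW] := boolP (k \in S).
Qed.

Lemma canonical_proj_residual_polar w :
  (forall k, dotv (alpha k) w <= 0) -> dotv (eta - p) w <= 0.
Proof.
case: pi_eta => [[-> ->] _ | [_ [S [gamma [gamma_ge0 _ -> _]]]] w_polar].
  by rewrite subr0 dotv0l.
rewrite dotv_suml; apply: sumr_le0 => k kS.
by rewrite dotvZl mulr_ge0_le0 ?gamma_ge0.
Qed.

Lemma canonical_proj_residual_orth : dotv (eta - p) p = 0.
Proof.
case: pi_eta => [[-> ->] | [_ [S [gamma [_ orth_S -> _]]]]].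
  by rewrite subr0 dotv0l.
by rewrite dotv_suml big1 // => k kS; rewrite dotvZl orth_S ?mulr0.
Qed.

End CanonicalProjection.

Theorem corollary2 (R : rcfType) (d K J : nat)
  (alpha : 'I_K -> 'rV[R]_d) (eta p : 'I_J.+1 -> 'rV[R]_d) :
  (forall k, alpha k != 0) ->
  (forall j, canonical_proj alpha (eta j) (p j)) ->
  (forall j : 'I_J.+1, j != ord0 -> normv (p j) < normv (p ord0)) ->
  forall j : 'I_J.+1, j != ord0 -> 0 < dotv (eta ord0 - eta j) (p ord0).
Proof.
move=> _ pi_eta norm_lt j j_neq0.
have orth1 := canonical_proj_residual_orth (pi_eta ord0).
have polar_j := canonical_proj_residual_polar (pi_eta j)
  (canonical_proj_polar (pi_eta ord0)).
have cross_lt := dotv_lt_self (normv_lt_dotv (norm_lt j j_neq0)).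
have split_eta (e q : 'rV[R]_d) : dotv e (p ord0) = dotv (e - q) (p ord0) + dotv q (p ord0).
  by rewrite dotvBl subrK.
rewrite dotvBl (split_eta _ (p ord0)) (split_eta (eta j) (p j)) orth1.
lra.
Qed.
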